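(* Let $\Lambda=\{z\in\mathbb C:\ \operatorname{Im} z>0\}$ with the measure $d\mu(z)=\frac{da\,db}{4b^2}$ for $z=a+ib$. For $\tau\in\mathbb C$, $z\in\Lambda$, $x\in\mathbb R$ put $$K(\tau;z,x)=\left(\frac{2i(x-z)(x-\overline z)}{z-\overline z}\right)^{\tau}$$ (the base is a positive real number, and the principal branch of the power is used), and for $f\in C_c^\infty(\Lambda)$ define the Fourier transform $$Jf(\tau;x)=\int_\Lambda K(\tau;z,x)\,f(z)\,d\mu(z),\qquad \tau\in\mathbb C,\ x\in\mathbb R .$$ For a function $\Phi(\tau;x)$ on $\mathbb C\times\mathbb R$ let $T_+\Phi(\tau;x)=\Phi(\tau+1;x)$ and $T_-\Phi(\tau;x)=\Phi(\tau-1;x)$; in an expression $c(\tau)\,x^p\frac{\partial^q}{\partial x^q}T_\pm$ the shift is applied first and then the result is differentiated in $x$ and multiplied by $x^p c(\tau)$. Let $\frac{\partial}{\partial z}=\frac12\bigl(\frac{\partial}{\partial a}-i\frac{\partial}{\partial b}\bigr)$, $\frac{\partial}{\partial \overline z}=\frac12\bigl(\frac{\partial}{\partial a}+i\frac{\partial}{\partial b}\bigr)$ be the Wirtinger derivatives. Then for every $f\in C_c^\infty(\Lambda)$, every $\tau\in\mathbb C\setminus\{-1,-\tfrac12\}$ and every $x\in\mathbb R$ the following identities hold: $$J\Bigl(\tfrac{1}{z-\overline z}f\Bigr)=\Bigl[\tfrac{1}{4i(1+\tau)(1+2\tau)}\tfrac{\partial^2}{\partial x^2}T_+-\tfrac{2i\tau}{2(1+2\tau)}T_-\Bigr]Jf;$$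 $$J\Bigl(\bigl(\tfrac{\partial}{\partial z}-\tfrac{\partial}{\partial\overline z}\bigr)f\Bigr)=\Bigl[\tfrac{2+\tau}{2i(1+\tau)(1+2\tau)}\tfrac{\partial^2}{\partial x^2}T_++\tfrac{2i\tau(-1+\tau)}{1+2\tau}T_-\Bigr]Jf;$$ $$J\Bigl(\bigl(z\tfrac{\partial}{\partial z}-\overline z\tfrac{\partial}{\partial\overline z}\bigr)f\Bigr)=\Bigl[\tfrac{2+\tau}{2i(1+\tau)(1+2\tau)}x\tfrac{\partial^2}{\partial x^2}T_+-\tfrac{2+\tau}{2i(1+\tau)}\tfrac{\partial}{\partial x}T_++\tfrac{2i(-1+\tau)\tau}{1+2\tau}xT_-\Bigr]Jf;$$ $$J\Bigl(\bigl(z^2\tfrac{\partial}{\partial z}-\overline z^{\,2}\tfrac{\partial}{\partial\overline z}\bigr)f\Bigr)=\Bigl[\tfrac{2+\tau}{2i(1+\tau)(1+2\tau)}x^2\tfrac{\partial^2}{\partial x^2}T_+-\tfrac{2(2+\tau)}{2i(1+\tau)}x\tfrac{\partial}{\partial x}T_++\tfrac{2(2+\tau)}{2i}T_++\tfrac{2i\tau(-1+\tau)}{1+2\tau}x^2T_-\Bigr]Jf,$$ where both sides are evaluated at $(\tau;x)$.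
   Context: $\Lambda$ is the Lobachevsky (hyperbolic) plane realized as the upper half-plane; $\mu$ is the $\mathrm{SL}(2,\mathbb R)$-invariant measure on it. $C_c^\infty(\Lambda)$ denotes smooth compactly supported functions on $\Lambda$. The operator $\frac1{z-\overline z}$ denotes multiplication by the function $z\mapsto \frac1{z-\overline z}$. *)

From Stdlib Require Import Reals.
From Coquelicot Require Import Coquelicot.
Open Scope R_scope.

Definition pt (a b : R) : C := (a, b).

Definition DerivC (g : R -> C) (x : R) : C :=
  (Derive (fun y => Re (g y)) x, Derive (fun y => Im (g y)) x).
Definition ex_DerivC (g : R -> C) (x : R) : Prop :=
  ex_derive (fun y => Re (g y)) x /\ ex_derive (fun y => Im (g y)) x.

(* Partial derivatives of f : R -> R -> C, f a b = f(a + i b). *)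
Definition d_a (f : R -> R -> C) : R -> R -> C := fun a b => DerivC (fun a' => f a' b) a.
Definition d_b (f : R -> R -> C) : R -> R -> C := fun a b => DerivC (fun b' => f a b') b.

Definition d_z (f : R -> R -> C) : R -> R -> C :=
  fun a b => Cmult (/ 2) (Cminus (d_a f a b) (Cmult Ci (d_b f a b))).
Definition d_zbar (f : R -> R -> C) : R -> R -> C :=
  fun a b => Cmult (/ 2) (Cplus (d_a f a b) (Cmult Ci (d_b f a b))).

Fixpoint CkLam (k : nat) (g : R -> R -> R) : Prop :=
  match k with
  | O => forall a b, 0 < b -> continuity_2d_pt g a b
  | S m =>
      (forall a b, 0 < b -> continuity_2d_pt g a b) /\
      (forall a b, 0 < b -> ex_derive (fun a' => g a' b) a /\ ex_derive (fun b' => g a b') b) /\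
      CkLam m (fun a b => Derive (fun a' => g a' b) a) /\
      CkLam m (fun a b => Derive (fun b' => g a b') b)
  end.

Definition Cc_infty_Lam (f : R -> R -> C) : Prop :=
  (forall k, CkLam k (fun a b => Re (f a b)) /\ CkLam k (fun a b => Im (f a b))) /\
  exists a0 a1 b0 b1, 0 < b0 /\
    forall a b, 0 < b -> f a b <> 0%C -> a0 <= a <= a1 /\ b0 <= b <= b1.

(* Integral over Lambda w.r.t. d mu = da db / (4 b^2): iterated (improper)
   integral, first in a over R, then in b over (0, +oo). *)
Definition int_Lam (g : R -> R -> C) : C :=
  @RInt_gen C_R_CompleteNormedModule (fun b => @RInt_gen C_R_CompleteNormedModule (fun a => Cmult (g a b) (/ (4 * b ^ 2))%R)
                              (Rbar_locally m_infty) (Rbar_locally p_infty))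
           (at_right 0) (Rbar_locally p_infty).

Definition Cpow_pos (r : R) (tau : C) : C :=
  Cmult (exp (Re tau * ln r)) (cos (Im tau * ln r), sin (Im tau * ln r)).

(* Kernel K(tau; z, x) = (2i (x - z)(x - zbar)/(z - zbar))^tau; the base is a
   positive real number, so we take its real part as the base. *)
Definition Kker (tau : C) (a b : R) (x : R) : C :=
  let z := pt a b in
  Cpow_pos (Re (Cdiv (Cmult (Cmult (Cmult 2 Ci) (Cminus x z)) (Cminus x (Cconj z)))
                     (Cminus z (Cconj z)))) tau.

Definition J (f : R -> R -> C) (tau : C) (x : R) : C :=
  int_Lam (fun a b => Cmult (Kker tau a b x) (f a b)).

(* The four identities are integrations by parts against the kernel.  For z = a + ib the base of
   K(tau; z, x) is w = ((x - a)^2 + b^2) / b > 0, so K(tau + 1) = w K(tau) and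
   d/dx K(tau + 1) = (tau + 1) (2 (x - a) / b) K(tau).  Since f has compact support in the
   half-plane, one may differentiate under the integral sign, so d/dx J f (tau + 1) and
   d^2/dx^2 J f (tau + 1) are transforms of f against explicit kernels.  Multiplication by
   1 / (z - zbar) = 1 / (2 i b) only rescales the kernel, while each of the three vector fields is
   of the form i (al d/da + be d/db) and is moved onto the kernel and the density 1 / (4 b^2) by
   integrating by parts in a and in b.  Writing every kernel as a multiple of K(tau - 1), both
   sides then have pointwise equal kernels, by a rational identity in x - a, b and tau. *)

From Stdlib Require Import Reals Lra Psatz Classical.
From Coquelicot Require Import Coquelicot.
Open Scope R_scope.

(** * Complex-valued calculus *)

Lemma C_ext (z w : C) : Re z = Re w -> Im z = Im w -> z = w.
Proof. exact (injective_projections z w). Qed.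

Lemma re_minus (z w : C) : Re (z - w) = Re z - Re w. Proof. reflexivity. Qed.
Lemma im_minus (z w : C) : Im (z - w) = Im z - Im w. Proof. reflexivity. Qed.
Lemma re_Ci : Re Ci = 0. Proof. reflexivity. Qed.
Lemma im_Ci : Im Ci = 1. Proof. reflexivity. Qed.
Lemma re_pt a b : Re (pt a b) = a. Proof. reflexivity. Qed.
Lemma im_pt a b : Im (pt a b) = b. Proof. reflexivity. Qed.
Lemma re_inv (z : C) : Re (/ z) = Re z / (Re z ^ 2 + Im z ^ 2). Proof. reflexivity. Qed.
Lemma im_inv (z : C) : Im (/ z) = - Im z / (Re z ^ 2 + Im z ^ 2). Proof. reflexivity. Qed.
Lemma re_div (z w : C) : Re (z / w) = Re (z * / w). Proof. reflexivity. Qed.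
Lemma im_div (z w : C) : Im (z / w) = Im (z * / w). Proof. reflexivity. Qed.
Lemma re_Cpow_pos r s : Re (Cpow_pos r s) = exp (Re s * ln r) * cos (Im s * ln r).
Proof. unfold Cpow_pos; rewrite re_mult; simpl; ring. Qed.
Lemma im_Cpow_pos r s : Im (Cpow_pos r s) = exp (Re s * ln r) * sin (Im s * ln r).
Proof. unfold Cpow_pos; rewrite im_mult; simpl; ring. Qed.

#[local] Hint Rewrite re_plus im_plus re_minus im_minus re_opp im_opp re_mult im_mult
  re_RtoC im_RtoC re_Ci im_Ci re_conj im_conj re_pt im_pt re_div im_div re_inv im_inv
  re_Cpow_pos im_Cpow_pos : complex_parts.

Ltac cparts := autorewrite with complex_parts.

Lemma is_derive_Rconst (c : R) x : is_derive (fun _ => c) x 0.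
Proof. apply (@is_derive_const R_AbsRing R_NormedModule). Qed.

Lemma is_derive_Rid x : is_derive (fun y => y) x 1.
Proof. apply (@is_derive_id R_AbsRing). Qed.

Lemma is_derive_Rplus (f g : R -> R) x df dg : is_derive f x df -> is_derive g x dg ->
  is_derive (fun y => f y + g y) x (df + dg).
Proof. intros; apply (is_derive_plus f g); assumption. Qed.

Lemma is_derive_Rminus (f g : R -> R) x df dg : is_derive f x df -> is_derive g x dg ->
  is_derive (fun y => f y - g y) x (df - dg).
Proof. intros; apply (is_derive_minus f g); assumption. Qed.

Lemma is_derive_Rmult (f g : R -> R) x df dg : is_derive f x df -> is_derive g x dg ->
  is_derive (fun y => f y * g y) x (df * g x + f x * dg).
Proof. intros; apply (is_derive_mult f g); try assumption; intros; apply Rmult_comm. Qed.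

Lemma is_derive_Rcomp (f g : R -> R) x df dg : is_derive f (g x) df -> is_derive g x dg ->
  is_derive (fun y => f (g y)) x (dg * df).
Proof. intros; apply (is_derive_comp f g); assumption. Qed.

Definition is_DerivC (g : R -> C) (x : R) (l : C) : Prop :=
  is_derive (fun y => Re (g y)) x (Re l) /\ is_derive (fun y => Im (g y)) x (Im l).

Lemma is_DerivC_unique g x l : is_DerivC g x l -> DerivC g x = l.
Proof. intros [H1 H2]; apply C_ext; apply is_derive_unique; assumption. Qed.

Lemma is_DerivC_ex g x l : is_DerivC g x l -> ex_DerivC g x.
Proof. intros [H1 H2]; split; eexists; eassumption. Qed.

Lemma is_DerivC_ext g h x l : (forall y, g y = h y) -> is_DerivC g x l -> is_DerivC h x l.
Proof.
  intros E [H1 H2]; split; eapply is_derive_ext; try eassumption; intros y; cbv beta; now rewrite E.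
Qed.

Lemma is_DerivC_eq g x l l' : is_DerivC g x l -> l = l' -> is_DerivC g x l'.
Proof. now intros H <-. Qed.

Lemma is_DerivC_const (c : C) x : is_DerivC (fun _ => c) x 0.
Proof. split; apply is_derive_Rconst. Qed.

Lemma is_DerivC_RtoC (f : R -> R) x df : is_derive f x df -> is_DerivC (fun y => RtoC (f y)) x df.
Proof.
  intros H; split; [exact H|].
  (* Unifying [fun y => Im (RtoC (f y))] with a constant function directly makes Coq loop. *)
  apply (is_derive_ext (fun _ => 0)); [reflexivity | apply is_derive_Rconst].
Qed.

Lemma is_DerivC_mult g h x l m : is_DerivC g x l -> is_DerivC h x m ->
  is_DerivC (fun y => (g y * h y)%C) x (l * h x + g x * m)%C.
Proof.
  intros [H1 H2] [H3 H4]; split; cparts.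
  - apply (is_derive_ext (fun y => Re (g y) * Re (h y) - Im (g y) * Im (h y))); [intro; now cparts|].
    replace (_ - _ + _) with (Re l * Re (h x) + Re (g x) * Re m - (Im l * Im (h x) + Im (g x) * Im m))
      by ring.
    apply is_derive_Rminus; now apply is_derive_Rmult.
  - apply (is_derive_ext (fun y => Re (g y) * Im (h y) + Im (g y) * Re (h y))); [intro; now cparts|].
    replace (_ + _ + _) with (Re l * Im (h x) + Re (g x) * Im m + (Im l * Re (h x) + Im (g x) * Re m))
      by ring.
    apply is_derive_Rplus; now apply is_derive_Rmult.
Qed.

Lemma is_DerivC_comp (G : R -> C) (g : R -> R) x l dg : is_DerivC G (g x) l -> is_derive g x dg ->
  is_DerivC (fun y => G (g y)) x (dg * l)%C.
Proof.
  intros [H1 H2] H; split; cparts; rewrite Rmult_0_l, ?Rminus_0_r, ?Rplus_0_r;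
    apply (is_derive_Rcomp (fun y => _ (G y)) g); assumption.
Qed.

Lemma Cpow_pos_succ r s : 0 < r -> Cpow_pos r (s + 1) = (r * Cpow_pos r s)%C.
Proof.
  intros Hr; apply C_ext; cparts;
  replace ((Re s + 1) * ln r) with (Re s * ln r + ln r) by ring;
  replace (Im s + 0) with (Im s) by ring;
  rewrite exp_plus, exp_ln by exact Hr; ring.
Qed.

Lemma is_DerivC_Cpow_pos r s : 0 < r ->
  is_DerivC (fun y => Cpow_pos y s) r (s * Cpow_pos r (s - 1))%C.
Proof.
  intros Hr.
  assert (Hln : forall c, is_derive (fun y => c * ln y) r (c * / r)).
  { intros c; apply is_derive_scal, is_derive_ln, Hr. }
  assert (Hexp : exp ((Re s - 1) * ln r) = exp (Re s * ln r) / r).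
  { replace ((Re s - 1) * ln r) with (Re s * ln r + - ln r) by ring.
    rewrite exp_plus, exp_Ropp, exp_ln by exact Hr; reflexivity. }
  split; cparts; rewrite Hexp, Rminus_0_r.
  - apply (is_derive_ext (fun y => exp (Re s * ln y) * cos (Im s * ln y))).
    { intro; symmetry; apply re_Cpow_pos. }
    replace (_ - _) with ((Re s * / r) * exp (Re s * ln r) * cos (Im s * ln r)
                          + exp (Re s * ln r) * ((Im s * / r) * - sin (Im s * ln r)))
      by (field; lra).
    apply (is_derive_Rmult (fun y => exp (Re s * ln y)) (fun y => cos (Im s * ln y))).
    + apply (is_derive_Rcomp exp (fun y => Re s * ln y)); [apply is_derive_exp | apply Hln].
    + apply (is_derive_Rcomp cos (fun y => Im s * ln y)); [apply is_derive_cos | apply Hln].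
  - apply (is_derive_ext (fun y => exp (Re s * ln y) * sin (Im s * ln y))).
    { intro; symmetry; apply im_Cpow_pos. }
    replace (_ + _) with ((Re s * / r) * exp (Re s * ln r) * sin (Im s * ln r)
                          + exp (Re s * ln r) * ((Im s * / r) * cos (Im s * ln r)))
      by (field; lra).
    apply (is_derive_Rmult (fun y => exp (Re s * ln y)) (fun y => sin (Im s * ln y))).
    + apply (is_derive_Rcomp exp (fun y => Re s * ln y)); [apply is_derive_exp | apply Hln].
    + apply (is_derive_Rcomp sin (fun y => Im s * ln y)); [apply is_derive_sin | apply Hln].
Qed.

(** * The kernel *)

Definition kernel_base (u b : R) : R := (u * u + b * b) / b.
Definition kernel (s : C) (u b : R) : C := Cpow_pos (kernel_base u b) s.

Lemma kernel_base_pos u b : 0 < b -> 0 < kernel_base u b.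
Proof. intros; unfold kernel_base; apply Rdiv_lt_0_compat; nra. Qed.

Lemma Kker_kernel s a b x : 0 < b -> Kker s a b x = kernel s (x - a) b.
Proof.
  intros Hb; unfold Kker, kernel, kernel_base; f_equal; unfold pt; cparts.
  field; split; [lra | intro; nra].
Qed.

Lemma kernel_pred s u b : 0 < b -> kernel s u b = (kernel_base u b * kernel (s - 1) u b)%C.
Proof.
  intros Hb; unfold kernel; rewrite <- Cpow_pos_succ by (apply kernel_base_pos, Hb).
  f_equal; ring.
Qed.

Definition kernel_du (s : C) (u b : R) : C := (RtoC (2 * u / b) * (s * kernel (s - 1) u b))%C.
Definition kernel_db (s : C) (u b : R) : C :=
  (RtoC (1 - u * u / (b * b)) * (s * kernel (s - 1) u b))%C.
Definition kernel_duu (s : C) (u b : R) : C :=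
  (RtoC (2 / b) * (s * kernel (s - 1) u b) + RtoC (2 * u / b) * (s * kernel_du (s - 1) u b))%C.

Lemma is_DerivC_kernel_u s u b : 0 < b ->
  is_DerivC (fun u => kernel s u b) u (kernel_du s u b).
Proof.
  intros Hb.
  apply (is_DerivC_comp (fun r => Cpow_pos r s) (fun u => kernel_base u b)).
  - apply is_DerivC_Cpow_pos, kernel_base_pos, Hb.
  - unfold kernel_base; auto_derive; [lra | field; lra].
Qed.

Lemma is_DerivC_kernel_b s u b : 0 < b ->
  is_DerivC (fun b => kernel s u b) b (kernel_db s u b).
Proof.
  intros Hb.
  apply (is_DerivC_comp (fun r => Cpow_pos r s) (fun b => kernel_base u b)).
  - apply is_DerivC_Cpow_pos, kernel_base_pos, Hb.
  - unfold kernel_base; auto_derive; [lra | field; lra].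
Qed.

Lemma is_DerivC_kernel_du s u b : 0 < b ->
  is_DerivC (fun u => kernel_du s u b) u (kernel_duu s u b).
Proof.
  intros Hb; unfold kernel_duu; unfold kernel_du at 1.
  eapply is_DerivC_eq.
  - apply (is_DerivC_mult (fun u => RtoC (2 * u / b)) (fun u => s * kernel (s - 1) u b)%C).
    + apply (is_DerivC_RtoC (fun u => 2 * u / b) u (2 / b)); auto_derive; [easy | field; lra].
    + apply (is_DerivC_mult (fun _ => s)); [apply is_DerivC_const | apply is_DerivC_kernel_u, Hb].
  - ring.
Qed.

(** * Continuity on the half-plane *)

Definition cont_Lam (G : R -> R -> R) : Prop := forall a b, 0 < b -> continuity_2d_pt G a b.
Definition cont_LamC (g : R -> R -> C) : Prop :=
  cont_Lam (fun a b => Re (g a b)) /\ cont_Lam (fun a b => Im (g a b)).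

Lemma near_pos b v : 0 < b -> Rabs (v - b) < b / 2 -> 0 < v.
Proof. intros Hb H; apply Rabs_def2 in H; lra. Qed.

Lemma cont_Lam_ext G H : (forall a b, 0 < b -> G a b = H a b) -> cont_Lam G -> cont_Lam H.
Proof.
  intros E HG a b Hb; apply continuity_2d_pt_ext_loc with G; [|apply HG, Hb].
  exists (mkposreal (b / 2) ltac:(lra)); simpl; intros u v _ Hv.
  apply E; eapply near_pos; eauto.
Qed.

Lemma cont_Lam_const c : cont_Lam (fun _ _ => c).
Proof. intros a b Hb; apply continuity_2d_pt_const. Qed.
Lemma cont_Lam_fst : cont_Lam (fun a _ => a).
Proof. intros a b Hb; apply continuity_2d_pt_id1. Qed.
Lemma cont_Lam_snd : cont_Lam (fun _ b => b).
Proof. intros a b Hb; apply continuity_2d_pt_id2. Qed.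
Lemma cont_Lam_plus G H : cont_Lam G -> cont_Lam H -> cont_Lam (fun a b => G a b + H a b).
Proof. intros HG HH a b Hb; apply continuity_2d_pt_plus; auto. Qed.
Lemma cont_Lam_minus G H : cont_Lam G -> cont_Lam H -> cont_Lam (fun a b => G a b - H a b).
Proof. intros HG HH a b Hb; apply continuity_2d_pt_minus; auto. Qed.
Lemma cont_Lam_mult G H : cont_Lam G -> cont_Lam H -> cont_Lam (fun a b => G a b * H a b).
Proof. intros HG HH a b Hb; apply continuity_2d_pt_mult; auto. Qed.
Lemma cont_Lam_opp G : cont_Lam G -> cont_Lam (fun a b => - G a b).
Proof. intros HG a b Hb; apply continuity_2d_pt_opp; auto. Qed.
Lemma cont_Lam_inv G : cont_Lam G -> (forall a b, 0 < b -> G a b <> 0) ->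
  cont_Lam (fun a b => / G a b).
Proof. intros HG Hn a b Hb; apply continuity_2d_pt_inv; auto. Qed.
Lemma cont_Lam_div G H : cont_Lam G -> cont_Lam H -> (forall a b, 0 < b -> H a b <> 0) ->
  cont_Lam (fun a b => G a b / H a b).
Proof. intros; apply cont_Lam_mult; [|apply cont_Lam_inv]; assumption. Qed.
Lemma cont_Lam_comp (phi : R -> R) G : cont_Lam G ->
  (forall a b, 0 < b -> continuity_pt phi (G a b)) -> cont_Lam (fun a b => phi (G a b)).
Proof. intros HG Hp a b Hb; apply continuity_1d_2d_pt_comp; auto. Qed.

Lemma cont_Lam_shift x P : cont_Lam P -> cont_Lam (fun a b => P (x - a) b).
Proof.
  intros HP a b Hb eps; destruct (HP (x - a) b Hb eps) as [d Hd].
  exists d; intros u v Hu Hv; apply Hd; [|exact Hv].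
  now replace (x - u - (x - a)) with (- (u - a)) by ring; rewrite Rabs_Ropp.
Qed.

Lemma cont_LamC_const (c : C) : cont_LamC (fun _ _ => c).
Proof. split; apply cont_Lam_const. Qed.
Lemma cont_LamC_RtoC G : cont_Lam G -> cont_LamC (fun a b => RtoC (G a b)).
Proof.
  intros H; split; [exact H|].
  apply (cont_Lam_ext (fun _ _ => 0)); [reflexivity | apply cont_Lam_const].
Qed.
Lemma cont_LamC_plus g h : cont_LamC g -> cont_LamC h -> cont_LamC (fun a b => (g a b + h a b)%C).
Proof.
  intros [H1 H2] [H3 H4]; split.
  - apply (cont_Lam_ext (fun a b => Re (g a b) + Re (h a b))); [intros; now cparts|].
    now apply cont_Lam_plus.
  - apply (cont_Lam_ext (fun a b => Im (g a b) + Im (h a b))); [intros; now cparts|].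
    now apply cont_Lam_plus.
Qed.
Lemma cont_LamC_minus g h : cont_LamC g -> cont_LamC h -> cont_LamC (fun a b => (g a b - h a b)%C).
Proof.
  intros [H1 H2] [H3 H4]; split.
  - apply (cont_Lam_ext (fun a b => Re (g a b) - Re (h a b))); [intros; now cparts|].
    now apply cont_Lam_minus.
  - apply (cont_Lam_ext (fun a b => Im (g a b) - Im (h a b))); [intros; now cparts|].
    now apply cont_Lam_minus.
Qed.
Lemma cont_LamC_mult g h : cont_LamC g -> cont_LamC h -> cont_LamC (fun a b => (g a b * h a b)%C).
Proof.
  intros [H1 H2] [H3 H4]; split.
  - apply (cont_Lam_ext (fun a b => Re (g a b) * Re (h a b) - Im (g a b) * Im (h a b)));
      [intros; now cparts|].
    apply cont_Lam_minus; now apply cont_Lam_mult.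
  - apply (cont_Lam_ext (fun a b => Re (g a b) * Im (h a b) + Im (g a b) * Re (h a b)));
      [intros; now cparts|].
    apply cont_Lam_plus; now apply cont_Lam_mult.
Qed.
Lemma cont_LamC_shift x g : cont_LamC g -> cont_LamC (fun a b => g (x - a) b).
Proof.
  intros [H1 H2]; split;
    [apply (cont_Lam_shift x (fun u b => Re (g u b))) | apply (cont_Lam_shift x (fun u b => Im (g u b)))];
    assumption.
Qed.

Lemma cont_Lam_kernel_base : cont_Lam kernel_base.
Proof.
  apply cont_Lam_div; [| apply cont_Lam_snd | intros; lra].
  apply cont_Lam_plus; apply cont_Lam_mult; (apply cont_Lam_fst || apply cont_Lam_snd).
Qed.

Lemma cont_LamC_kernel s : cont_LamC (kernel s).
Proof.
  assert (Hln : forall c, cont_Lam (fun u b => c * ln (kernel_base u b))).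
  { intros c; apply cont_Lam_mult; [apply cont_Lam_const|].
    apply cont_Lam_comp; [apply cont_Lam_kernel_base|]; intros a b Hb.
    apply continuity_pt_filterlim, continuous_ln, kernel_base_pos, Hb. }
  assert (Hexp : cont_Lam (fun u b => exp (Re s * ln (kernel_base u b)))).
  { apply (cont_Lam_comp exp (fun u b => Re s * ln (kernel_base u b))); [apply Hln|].
    intros; apply derivable_continuous_pt, derivable_pt_exp. }
  split; unfold kernel.
  - apply (cont_Lam_ext
             (fun u b => exp (Re s * ln (kernel_base u b)) * cos (Im s * ln (kernel_base u b))));
      [intros; symmetry; apply re_Cpow_pos|].
    apply cont_Lam_mult; [exact Hexp|].
    apply (cont_Lam_comp cos (fun u b => Im s * ln (kernel_base u b))); [apply Hln|].
    intros; apply continuity_cos.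
  - apply (cont_Lam_ext
             (fun u b => exp (Re s * ln (kernel_base u b)) * sin (Im s * ln (kernel_base u b))));
      [intros; symmetry; apply im_Cpow_pos|].
    apply cont_Lam_mult; [exact Hexp|].
    apply (cont_Lam_comp sin (fun u b => Im s * ln (kernel_base u b))); [apply Hln|].
    intros; apply continuity_sin.
Qed.

Ltac pos_neq_0 := apply Rgt_not_eq; repeat apply Rmult_lt_0_compat; try apply pow_lt; lra.

Definition mu_density (b : R) : R := / (4 * b ^ 2).

Lemma cont_Lam_mu_density : cont_Lam (fun _ b => mu_density b).
Proof.
  apply cont_Lam_inv; [|intros; pos_neq_0].
  apply (cont_Lam_ext (fun _ b => 4 * (b * b))); [intros; ring|].
  apply cont_Lam_mult; [apply cont_Lam_const | apply cont_Lam_mult; apply cont_Lam_snd].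
Qed.

Definition mu_density_deriv (b : R) : R := - / (2 * (b * b * b)).

Lemma is_derive_mu_density b : 0 < b -> is_derive mu_density b (mu_density_deriv b).
Proof. intros Hb; unfold mu_density, mu_density_deriv; auto_derive; [nra | field; lra]. Qed.

Lemma cont_Lam_mu_density_deriv : cont_Lam (fun _ b => mu_density_deriv b).
Proof.
  apply cont_Lam_opp, cont_Lam_inv; [|intros; pos_neq_0].
  apply cont_Lam_mult; [apply cont_Lam_const|]; repeat apply cont_Lam_mult; apply cont_Lam_snd.
Qed.

Create HintDb cont_Lam.
#[local] Hint Resolve cont_Lam_mu_density cont_Lam_mu_density_deriv cont_LamC_kernel : cont_Lam.

Ltac cont_Lam_auto :=
  lazymatch goal with
  | |- cont_Lam (fun _ _ => ?c) => apply cont_Lam_const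
  | |- cont_Lam (fun a _ => a) => apply cont_Lam_fst
  | |- cont_Lam (fun _ b => b) => apply cont_Lam_snd
  | |- cont_Lam (fun a b => @?g a b + @?h a b) => apply (cont_Lam_plus g h); cont_Lam_auto
  | |- cont_Lam (fun a b => @?g a b - @?h a b) => apply (cont_Lam_minus g h); cont_Lam_auto
  | |- cont_Lam (fun a b => @?g a b * @?h a b) => apply (cont_Lam_mult g h); cont_Lam_auto
  | |- cont_Lam (fun a b => - @?g a b) => apply (cont_Lam_opp g); cont_Lam_auto
  | |- cont_Lam (fun a b => @?g a b / @?h a b) =>
      apply (cont_Lam_div g h); [cont_Lam_auto | cont_Lam_auto | intros; pos_neq_0]
  | |- cont_Lam (fun a b => / @?g a b) =>
      apply (cont_Lam_inv g); [cont_Lam_auto | intros; pos_neq_0]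
  | |- cont_LamC (fun _ _ => ?c) => apply cont_LamC_const
  | |- cont_LamC (fun a b => (@?g a b + @?h a b)%C) => apply (cont_LamC_plus g h); cont_Lam_auto
  | |- cont_LamC (fun a b => (@?g a b - @?h a b)%C) => apply (cont_LamC_minus g h); cont_Lam_auto
  | |- cont_LamC (fun a b => (@?g a b * @?h a b)%C) => apply (cont_LamC_mult g h); cont_Lam_auto
  | |- cont_LamC (fun a b => RtoC (@?g a b)) => apply (cont_LamC_RtoC g); cont_Lam_auto
  | |- cont_LamC (fun a b => ?k (?x - a) b) => apply (cont_LamC_shift x k); cont_Lam_auto
  | |- _ => eauto with cont_Lam
  end.

Lemma cont_LamC_kernel_du s : cont_LamC (kernel_du s).
Proof. unfold kernel_du; cont_Lam_auto. Qed.

Lemma cont_LamC_kernel_db s : cont_LamC (kernel_db s).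
Proof. unfold kernel_db; cont_Lam_auto. Qed.

Lemma cont_LamC_kernel_duu s : cont_LamC (kernel_duu s).
Proof. unfold kernel_duu; cont_Lam_auto; apply cont_LamC_kernel_du. Qed.

#[local] Hint Resolve cont_LamC_kernel_du cont_LamC_kernel_db cont_LamC_kernel_duu : cont_Lam.

(** * Parametric integrals over rectangles *)

Lemma continuity_2d_pt_fst G a b : continuity_2d_pt G a b -> continuity_pt (fun a => G a b) a.
Proof.
  intros H; apply continuity_pt_locally; intros eps.
  destruct (H eps) as [d Hd]; exists d; intros y Hy; apply Hd; [exact Hy|].
  rewrite Rminus_eq_0, Rabs_R0; apply cond_pos.
Qed.

Lemma continuity_2d_pt_snd G a b : continuity_2d_pt G a b -> continuity_pt (fun b => G a b) b.
Proof.
  intros H; apply continuity_pt_locally; intros eps.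
  destruct (H eps) as [d Hd]; exists d; intros y Hy; apply Hd; [|exact Hy].
  rewrite Rminus_eq_0, Rabs_R0; apply cond_pos.
Qed.

Lemma ex_RInt_cont_Lam G A0 A1 b : cont_Lam G -> 0 < b -> ex_RInt (fun a => G a b) A0 A1.
Proof.
  intros HG Hb; apply (@ex_RInt_continuous R_CompleteNormedModule); intros a _.
  apply continuity_pt_filterlim, continuity_2d_pt_fst, HG, Hb.
Qed.

Lemma continuity_pt_bounded (g : R -> R) A0 A1 : A0 <= A1 ->
  (forall a, A0 <= a <= A1 -> continuity_pt g a) ->
  exists M, 0 <= M /\ forall a, A0 <= a <= A1 -> Rabs (g a) <= M.
Proof.
  intros HA Hc.
  destruct (continuity_ab_maj (fun a => Rabs (g a)) A0 A1 HA) as [m [Hm _]].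
  { intros c Hc'; apply continuity_pt_filterlim, continuous_Rabs_comp.
    apply continuity_pt_filterlim, Hc, Hc'. }
  exists (Rabs (g m)); split; [apply Rabs_pos | exact Hm].
Qed.

Lemma RInt_dist_le (f g : R -> R) A0 A1 e : A0 <= A1 -> ex_RInt f A0 A1 -> ex_RInt g A0 A1 ->
  (forall t, A0 <= t <= A1 -> Rabs (f t - g t) <= e) ->
  Rabs (RInt f A0 A1 - RInt g A0 A1) <= (A1 - A0) * e.
Proof.
  intros HA Hf Hg He.
  rewrite <- (RInt_minus (V := R_CompleteNormedModule) f g) by assumption.
  apply abs_RInt_le_const; [exact HA | | exact He].
  apply (ex_RInt_minus (V := R_NormedModule) f g); assumption.
Qed.

Lemma cont_Lam_shift_unif P x0 b0 A0 A1 (eps : posreal) : cont_Lam P -> 0 < b0 ->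
  exists d : posreal, forall x b t, Rabs (x - x0) < d -> Rabs (b - b0) < d -> A0 <= t <= A1 ->
    Rabs (P (x - t) b - P (x0 - t) b0) < eps.
Proof.
  intros HP Hb0.
  destruct (uniform_continuity_2d P (x0 - A1 - 1) (x0 - A0 + 1) (b0 / 2) (3 * b0 / 2)
              ltac:(intros; apply HP; lra) eps) as [dP HdP].
  exists (mkposreal (Rmin dP (Rmin 1 (b0 / 2))) ltac:(repeat apply Rmin_pos; [apply cond_pos | lra | lra])).
  simpl; intros x b t Hx Hb Ht.
  pose proof (Rmin_l dP (Rmin 1 (b0 / 2))); pose proof (Rmin_r dP (Rmin 1 (b0 / 2))).
  pose proof (Rmin_l 1 (b0 / 2)); pose proof (Rmin_r 1 (b0 / 2)).
  assert (Hx' := Hx); assert (Hb' := Hb); apply Rabs_def2 in Hx', Hb'.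
  apply HdP; try lra.
  replace (x - t - (x0 - t)) with (x - x0) by ring; lra.
Qed.

Lemma Rabs_mult_dist_le p0 p1 q0 q1 e N M : e <= 1 ->
  Rabs (p1 - p0) <= e -> Rabs (q1 - q0) <= e -> Rabs p0 <= N -> Rabs q0 <= M ->
  Rabs (p1 * q1 - p0 * q0) <= e * (N + M + 1).
Proof.
  intros He Hp Hq HN HM.
  assert (Hq1 : Rabs q1 <= M + 1).
  { replace q1 with (q0 + (q1 - q0)) by ring; eapply Rle_trans; [apply Rabs_triang | lra]. }
  replace (p1 * q1 - p0 * q0) with ((p1 - p0) * q1 + p0 * (q1 - q0)) by ring.
  eapply Rle_trans; [apply Rabs_triang|]; rewrite !Rabs_mult.
  pose proof (Rabs_pos (p1 - p0)); pose proof (Rabs_pos p0); pose proof (Rabs_pos q1).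
  pose proof (Rabs_pos (q1 - q0)).
  assert (Rabs (p1 - p0) * Rabs q1 <= e * (M + 1)) by (apply Rmult_le_compat; lra).
  assert (Rabs p0 * Rabs (q1 - q0) <= N * e) by (apply Rmult_le_compat; lra).
  lra.
Qed.

Lemma RInt_conv_continuous P Q A0 A1 x0 b0 : 0 < b0 -> A0 <= A1 -> cont_Lam P -> cont_Lam Q ->
  continuity_2d_pt (fun x b => RInt (fun a => P (x - a) b * Q a b) A0 A1) x0 b0.
Proof.
  intros Hb0 HA HP HQ eps.
  destruct (continuity_pt_bounded (fun t => P (x0 - t) b0) A0 A1 HA) as [N [HN0 HN]].
  { intros t _; apply (continuity_2d_pt_fst (fun t b => P (x0 - t) b)), cont_Lam_shift; assumption. }
  destruct (continuity_pt_bounded (fun t => Q t b0) A0 A1 HA) as [M [HM0 HM]].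
  { intros t _; apply continuity_2d_pt_fst, HQ, Hb0. }
  assert (He : 0 < Rmin 1 (eps / ((A1 - A0 + 1) * (N + M + 1)))).
  { apply Rmin_pos; [lra|]; apply Rdiv_lt_0_compat; [apply cond_pos | apply Rmult_lt_0_compat; lra]. }
  set (e := mkposreal _ He).
  destruct (cont_Lam_shift_unif P x0 b0 A0 A1 e HP Hb0) as [dP HdP].
  (* [Q t b] is [u |-> Q (0 - u) b] evaluated at [0 - t], so the same uniform estimate applies. *)
  destruct (cont_Lam_shift_unif (fun u b => Q (0 - u) b) 0 b0 A0 A1 e (cont_Lam_shift 0 Q HQ) Hb0)
    as [dQ HdQ].
  exists (mkposreal (Rmin (Rmin dP dQ) (b0 / 2)) ltac:(repeat apply Rmin_pos; try apply cond_pos; lra)).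
  simpl; intros x b Hx Hb.
  pose proof (Rmin_l (Rmin dP dQ) (b0 / 2)); pose proof (Rmin_r (Rmin dP dQ) (b0 / 2)).
  pose proof (Rmin_l dP dQ); pose proof (Rmin_r dP dQ).
  assert (Hbpos : 0 < b) by (apply Rabs_def2 in Hb; lra).
  assert (Hex : forall c b, 0 < b -> ex_RInt (fun a => P (c - a) b * Q a b) A0 A1).
  { intros c b' Hb'; apply (ex_RInt_cont_Lam (fun a b => P (c - a) b * Q a b)); [|exact Hb'].
    apply cont_Lam_mult; [apply cont_Lam_shift|]; assumption. }
  eapply Rle_lt_trans; [apply (RInt_dist_le _ _ A0 A1 (e * (N + M + 1))); auto|].
  - intros t Ht; apply Rabs_mult_dist_le; [apply Rmin_l | | | apply HN, Ht | apply HM, Ht].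
    + apply Rlt_le, HdP; [lra | lra | exact Ht].
    + assert (Hq := HdQ 0 b t ltac:(rewrite Rminus_0_r, Rabs_R0; apply cond_pos) ltac:(lra) Ht).
      replace (0 - (0 - t)) with t in Hq by ring; lra.
  - simpl; set (r := eps / ((A1 - A0 + 1) * (N + M + 1))).
    pose proof (cond_pos eps).
    assert (Hr : Rmin 1 r * (N + M + 1) <= eps / (A1 - A0 + 1)).
    { eapply Rle_trans; [apply Rmult_le_compat_r; [lra | apply Rmin_r]|].
      unfold r; right; field; lra. }
    apply (Rle_lt_trans _ ((A1 - A0) * (eps / (A1 - A0 + 1)))); [apply Rmult_le_compat_l; lra|].
    replace ((A1 - A0) * (eps / (A1 - A0 + 1))) with (eps - eps / (A1 - A0 + 1)) by (field; lra).
    assert (0 < eps / (A1 - A0 + 1)) by (apply Rdiv_lt_0_compat; lra).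
    lra.
Qed.

Definition RInt2 (A0 A1 B0 B1 : R) (G : R -> R -> R) : R :=
  RInt (fun b => RInt (fun a => G a b) A0 A1) B0 B1.
Definition RInt_C (A0 A1 : R) (f : R -> C) : C :=
  (RInt (fun t => Re (f t)) A0 A1, RInt (fun t => Im (f t)) A0 A1).
Definition RInt2C (A0 A1 B0 B1 : R) (g : R -> R -> C) : C :=
  RInt_C B0 B1 (fun b => RInt_C A0 A1 (fun a => g a b)).

Lemma re_RInt2C A0 A1 B0 B1 g : Re (RInt2C A0 A1 B0 B1 g) = RInt2 A0 A1 B0 B1 (fun a b => Re (g a b)).
Proof. reflexivity. Qed.
Lemma im_RInt2C A0 A1 B0 B1 g : Im (RInt2C A0 A1 B0 B1 g) = RInt2 A0 A1 B0 B1 (fun a b => Im (g a b)).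
Proof. reflexivity. Qed.

#[local] Hint Rewrite re_RInt2C im_RInt2C : complex_parts.

Section Rectangle.

Variables A0 A1 B0 B1 : R.
Hypothesis HA : A0 <= A1.
Hypothesis HB0 : 0 < B0.
Hypothesis HB : B0 <= B1.

Lemma continuity_pt_RInt_fst G b : cont_Lam G -> 0 < b ->
  continuity_pt (fun b => RInt (fun a => G a b) A0 A1) b.
Proof.
  intros HG Hb.
  apply (continuity_2d_pt_snd (fun x b => RInt (fun a => G a b) A0 A1) 0 b).
  apply continuity_2d_pt_ext with (fun x b => RInt (fun a => (fun _ _ => 1) (x - a) b * G a b) A0 A1).
  { intros; apply RInt_ext; intros; apply Rmult_1_l. }
  apply (RInt_conv_continuous (fun _ _ => 1) G); [exact Hb | exact HA | apply cont_Lam_const | exact HG].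
Qed.

Lemma ex_RInt_RInt_fst G : cont_Lam G -> ex_RInt (fun b => RInt (fun a => G a b) A0 A1) B0 B1.
Proof.
  intros HG; apply (@ex_RInt_continuous R_CompleteNormedModule); intros b Hb.
  rewrite Rmin_left in Hb by lra.
  apply continuity_pt_filterlim, continuity_pt_RInt_fst; [exact HG | lra].
Qed.

Lemma RInt2_ext G H : (forall a b, 0 < b -> G a b = H a b) -> RInt2 A0 A1 B0 B1 G = RInt2 A0 A1 B0 B1 H.
Proof.
  intros E; apply RInt_ext; intros b Hb; rewrite Rmin_left in Hb by lra.
  apply RInt_ext; intros; apply E; lra.
Qed.

Lemma RInt2_plus G H : cont_Lam G -> cont_Lam H ->
  RInt2 A0 A1 B0 B1 (fun a b => G a b + H a b) = RInt2 A0 A1 B0 B1 G + RInt2 A0 A1 B0 B1 H.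
Proof.
  intros HG HH; unfold RInt2.
  rewrite <- (RInt_plus (V := R_CompleteNormedModule)) by (apply ex_RInt_RInt_fst; assumption).
  apply RInt_ext; intros b Hb; rewrite Rmin_left in Hb by lra.
  apply (RInt_plus (V := R_CompleteNormedModule)); apply ex_RInt_cont_Lam; auto; lra.
Qed.

Lemma RInt2_minus G H : cont_Lam G -> cont_Lam H ->
  RInt2 A0 A1 B0 B1 (fun a b => G a b - H a b) = RInt2 A0 A1 B0 B1 G - RInt2 A0 A1 B0 B1 H.
Proof.
  intros HG HH; unfold RInt2.
  rewrite <- (RInt_minus (V := R_CompleteNormedModule)) by (apply ex_RInt_RInt_fst; assumption).
  apply RInt_ext; intros b Hb; rewrite Rmin_left in Hb by lra.
  apply (RInt_minus (V := R_CompleteNormedModule)); apply ex_RInt_cont_Lam; auto; lra.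
Qed.

Lemma RInt2_scal c G : cont_Lam G -> RInt2 A0 A1 B0 B1 (fun a b => c * G a b) = c * RInt2 A0 A1 B0 B1 G.
Proof.
  intros HG; unfold RInt2.
  rewrite <- (RInt_scal (V := R_CompleteNormedModule)) by (apply ex_RInt_RInt_fst; assumption).
  apply RInt_ext; intros b Hb; rewrite Rmin_left in Hb by lra.
  apply (RInt_scal (V := R_CompleteNormedModule)); apply ex_RInt_cont_Lam; auto; lra.
Qed.

Lemma RInt2C_ext g h : (forall a b, 0 < b -> g a b = h a b) ->
  RInt2C A0 A1 B0 B1 g = RInt2C A0 A1 B0 B1 h.
Proof.
  intros E; apply C_ext; cparts; apply RInt2_ext; intros; now rewrite E.
Qed.

Lemma RInt2C_plus g h : cont_LamC g -> cont_LamC h ->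
  RInt2C A0 A1 B0 B1 (fun a b => g a b + h a b)%C = (RInt2C A0 A1 B0 B1 g + RInt2C A0 A1 B0 B1 h)%C.
Proof.
  intros [G1 G2] [H1 H2]; apply C_ext; cparts; rewrite <- RInt2_plus by auto;
    apply RInt2_ext; intros; now cparts.
Qed.

Lemma RInt2C_minus g h : cont_LamC g -> cont_LamC h ->
  RInt2C A0 A1 B0 B1 (fun a b => g a b - h a b)%C = (RInt2C A0 A1 B0 B1 g - RInt2C A0 A1 B0 B1 h)%C.
Proof.
  intros [G1 G2] [H1 H2]; apply C_ext; cparts; rewrite <- RInt2_minus by auto;
    apply RInt2_ext; intros; now cparts.
Qed.

Lemma RInt2C_scal (c : C) g : cont_LamC g ->
  RInt2C A0 A1 B0 B1 (fun a b => c * g a b)%C = (c * RInt2C A0 A1 B0 B1 g)%C.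
Proof.
  intros [G1 G2]; apply C_ext; cparts; rewrite <- !RInt2_scal by auto.
  - rewrite <- RInt2_minus by (apply cont_Lam_mult; auto; apply cont_Lam_const).
    apply RInt2_ext; intros; now cparts.
  - rewrite <- RInt2_plus by (apply cont_Lam_mult; auto; apply cont_Lam_const).
    apply RInt2_ext; intros; now cparts.
Qed.

End Rectangle.

Lemma continuity_2d_pt_diff_fst D y a t : continuity_2d_pt D (y - a) t ->
  continuity_2d_pt (fun u v => D (u - v) t) y a.
Proof.
  intros H; apply (continuity_1d_2d_pt_comp (fun w => D w t) (fun u v => u - v)).
  - apply (continuity_2d_pt_fst D (y - a) t H).
  - apply continuity_2d_pt_minus; [apply continuity_2d_pt_id1 | apply continuity_2d_pt_id2].
Qed.

Lemma continuity_2d_pt_snd_fst Q y a t : continuity_2d_pt Q a t ->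
  continuity_2d_pt (fun u v => Q v t) y a.
Proof.
  intros H; apply (continuity_1d_2d_pt_comp (fun w => Q w t) (fun u v => v)).
  - apply (continuity_2d_pt_fst Q a t H).
  - apply continuity_2d_pt_id2.
Qed.

Lemma continuity_2d_pt_swap G a b : continuity_2d_pt G a b -> continuity_2d_pt (fun u v => G v u) b a.
Proof. intros H eps; destruct (H eps) as [d Hd]; exists d; intros u v Hu Hv; apply Hd; assumption. Qed.

Section ConvolutionDerivative.

Variables (P dP Q : R -> R -> R) (A0 A1 B0 B1 : R).
Hypothesis HA : A0 <= A1.
Hypothesis HB0 : 0 < B0.
Hypothesis HB : B0 <= B1.
Hypothesis HPd : forall u b, 0 < b -> is_derive (fun u => P u b) u (dP u b).
Hypothesis HP : cont_Lam P.
Hypothesis HdP : cont_Lam dP.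
Hypothesis HQ : cont_Lam Q.

Lemma is_derive_conv_integrand y a t : 0 < t ->
  is_derive (fun u => P (u - a) t * Q a t) y (dP (y - a) t * Q a t).
Proof.
  intros Ht.
  replace (dP (y - a) t * Q a t) with ((1 - 0) * dP (y - a) t * Q a t + P (y - a) t * 0) by ring.
  apply (is_derive_Rmult (fun u => P (u - a) t) (fun _ => Q a t)); [|apply is_derive_Rconst].
  apply (is_derive_Rcomp (fun w => P w t) (fun u => u - a)); [apply HPd, Ht|].
  apply is_derive_Rminus; [apply is_derive_Rid | apply is_derive_Rconst].
Qed.

Lemma is_derive_RInt_conv y t : 0 < t ->
  is_derive (fun y => RInt (fun a => P (y - a) t * Q a t) A0 A1) y
    (RInt (fun a => dP (y - a) t * Q a t) A0 A1).
Proof.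
  intros Ht.
  rewrite (RInt_ext _ (fun a => Derive (fun u => P (u - a) t * Q a t) y))
    by (intros; symmetry; apply is_derive_unique, is_derive_conv_integrand, Ht).
  apply (is_derive_RInt_param (fun u a => P (u - a) t * Q a t)).
  - apply filter_forall; intros y0 a _; eexists; apply is_derive_conv_integrand, Ht.
  - intros a _.
    apply continuity_2d_pt_ext with (fun u v => dP (u - v) t * Q v t).
    { intros u v; symmetry; apply is_derive_unique, is_derive_conv_integrand, Ht. }
    apply continuity_2d_pt_mult.
    + apply (continuity_2d_pt_diff_fst dP y a t), HdP, Ht.
    + apply (continuity_2d_pt_snd_fst Q y a t), HQ, Ht.
  - apply filter_forall; intros y0.
    apply (ex_RInt_cont_Lam (fun a b => P (y0 - a) b * Q a b)); [|exact Ht].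
    apply cont_Lam_mult; [apply cont_Lam_shift, HP | exact HQ].
Qed.

Lemma is_derive_RInt2_conv x :
  is_derive (fun x => RInt2 A0 A1 B0 B1 (fun a b => P (x - a) b * Q a b)) x
    (RInt2 A0 A1 B0 B1 (fun a b => dP (x - a) b * Q a b)).
Proof.
  unfold RInt2.
  rewrite (RInt_ext _ (fun b => Derive (fun u => RInt (fun a => P (u - a) b * Q a b) A0 A1) x)).
  2: { intros b Hb; rewrite Rmin_left in Hb by lra.
       symmetry; apply is_derive_unique, is_derive_RInt_conv; lra. }
  apply (is_derive_RInt_param (fun u b => RInt (fun a => P (u - a) b * Q a b) A0 A1)).
  - apply filter_forall; intros y0 b Hb; rewrite Rmin_left in Hb by lra.
    eexists; apply is_derive_RInt_conv; lra.
  - intros b Hb; rewrite Rmin_left in Hb by lra.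
    apply continuity_2d_pt_ext_loc with (fun u v => RInt (fun a => dP (u - a) v * Q a v) A0 A1).
    { exists (mkposreal (b / 2) ltac:(lra)); simpl; intros u v _ Hv.
      symmetry; apply is_derive_unique, is_derive_RInt_conv.
      eapply near_pos; [|exact Hv]; lra. }
    apply RInt_conv_continuous; auto; lra.
  - apply filter_forall; intros y0.
    apply (@ex_RInt_continuous R_CompleteNormedModule); intros b Hb.
    rewrite Rmin_left in Hb by lra.
    apply continuity_pt_filterlim.
    apply (continuity_2d_pt_snd (fun x b => RInt (fun a => P (x - a) b * Q a b) A0 A1) y0 b).
    apply RInt_conv_continuous; auto; lra.
Qed.

End ConvolutionDerivative.

Lemma RInt_const_0 a b : RInt (fun _ => 0) a b = 0.
Proof. rewrite RInt_const; unfold scal; simpl; unfold mult; simpl; ring. Qed.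

Section IntegrationByParts.

Variables A0 A1 B0 B1 : R.
Hypothesis HA : A0 <= A1.
Hypothesis HB0 : 0 < B0.
Hypothesis HB : B0 <= B1.

Lemma RInt2_partial_a_zero (U dU : R -> R -> R) :
  (forall a b, 0 < b -> is_derive (fun a => U a b) a (dU a b)) -> cont_Lam dU ->
  (forall b, 0 < b -> U A0 b = 0 /\ U A1 b = 0) -> RInt2 A0 A1 B0 B1 dU = 0.
Proof.
  intros Hd HdU Hbd; unfold RInt2.
  rewrite <- (RInt_const_0 B0 B1); apply RInt_ext; intros b Hb; rewrite Rmin_left in Hb by lra.
  apply is_RInt_unique.
  destruct (Hbd b ltac:(lra)) as [E0 E1].
  replace 0 with (minus (U A1 b) (U A0 b)) by (rewrite E0, E1; unfold minus, plus, opp; simpl; ring).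
  apply (is_RInt_derive (fun a => U a b) (fun a => dU a b)).
  - intros; apply Hd; lra.
  - intros; apply continuity_pt_filterlim, continuity_2d_pt_fst, HdU; lra.
Qed.

Lemma is_derive_RInt_snd (U dU : R -> R -> R) b :
  (forall a b, 0 < b -> is_derive (fun b => U a b) b (dU a b)) -> cont_Lam U -> cont_Lam dU -> 0 < b ->
  is_derive (fun b => RInt (fun a => U a b) A0 A1) b (RInt (fun a => dU a b) A0 A1).
Proof.
  intros Hd HU HdU Hb.
  set (near_b := mkposreal (b / 2) ltac:(lra)).
  rewrite (RInt_ext _ (fun a => Derive (fun v => U a v) b))
    by (intros; symmetry; apply is_derive_unique, Hd, Hb).
  apply (is_derive_RInt_param (fun v a => U a v)).
  - exists near_b; intros v Hv a _; eexists; apply Hd; eapply near_pos; [exact Hb | exact Hv].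
  - intros a _; apply continuity_2d_pt_ext_loc with (fun v a => dU a v).
    { exists near_b; simpl; intros v a' Hv _.
      symmetry; apply is_derive_unique, Hd; eapply near_pos; [exact Hb | exact Hv]. }
    apply (continuity_2d_pt_swap dU a b), HdU, Hb.
  - exists near_b; intros v Hv; apply ex_RInt_cont_Lam; [exact HU|].
    eapply near_pos; [exact Hb | exact Hv].
Qed.

Lemma RInt2_partial_b_zero (U dU : R -> R -> R) :
  (forall a b, 0 < b -> is_derive (fun b => U a b) b (dU a b)) -> cont_Lam U -> cont_Lam dU ->
  (forall a, U a B0 = 0 /\ U a B1 = 0) -> RInt2 A0 A1 B0 B1 dU = 0.
Proof.
  intros Hd HU HdU Hbd; unfold RInt2; apply is_RInt_unique.
  replace 0 with (minus (RInt (fun a => U a B1) A0 A1) (RInt (fun a => U a B0) A0 A1)).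
  2: { rewrite (RInt_ext (fun a => U a B1) (fun _ => 0)), (RInt_ext (fun a => U a B0) (fun _ => 0))
         by (intros; apply Hbd).
       rewrite RInt_const_0; unfold minus, plus, opp; simpl; ring. }
  apply (is_RInt_derive (fun b => RInt (fun a => U a b) A0 A1) (fun b => RInt (fun a => dU a b) A0 A1)).
  - intros b Hb; rewrite Rmin_left in Hb by lra; apply is_derive_RInt_snd; auto; lra.
  - intros b Hb; rewrite Rmin_left in Hb by lra.
    apply continuity_pt_filterlim, continuity_pt_RInt_fst; auto; lra.
Qed.

Lemma RInt2C_partial_a_zero (U dU : R -> R -> C) :
  (forall a b, 0 < b -> is_DerivC (fun a => U a b) a (dU a b)) -> cont_LamC dU ->
  (forall b, 0 < b -> U A0 b = 0%C /\ U A1 b = 0%C) -> RInt2C A0 A1 B0 B1 dU = 0%C.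
Proof.
  intros Hd [G1 G2] Hbd; apply C_ext; cparts.
  - apply (RInt2_partial_a_zero (fun a b => Re (U a b))); auto.
    + intros a b Hb; apply (Hd a b Hb).
    + intros b Hb; destruct (Hbd b Hb) as [-> ->]; split; reflexivity.
  - apply (RInt2_partial_a_zero (fun a b => Im (U a b))); auto.
    + intros a b Hb; apply (Hd a b Hb).
    + intros b Hb; destruct (Hbd b Hb) as [-> ->]; split; reflexivity.
Qed.

Lemma RInt2C_partial_b_zero (U dU : R -> R -> C) :
  (forall a b, 0 < b -> is_DerivC (fun b => U a b) b (dU a b)) -> cont_LamC U -> cont_LamC dU ->
  (forall a, U a B0 = 0%C /\ U a B1 = 0%C) -> RInt2C A0 A1 B0 B1 dU = 0%C.
Proof.
  intros Hd [G1 G2] [G3 G4] Hbd; apply C_ext; cparts.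
  - apply (RInt2_partial_b_zero (fun a b => Re (U a b))); auto.
    + intros a b Hb; apply (Hd a b Hb).
    + intros a; destruct (Hbd a) as [-> ->]; split; reflexivity.
  - apply (RInt2_partial_b_zero (fun a b => Im (U a b))); auto.
    + intros a b Hb; apply (Hd a b Hb).
    + intros a; destruct (Hbd a) as [-> ->]; split; reflexivity.
Qed.

End IntegrationByParts.

(** * From the integral over the half-plane to a rectangle *)

Lemma is_RInt_RInt_C (f : R -> C) A0 A1 :
  ex_RInt (fun t => Re (f t)) A0 A1 -> ex_RInt (fun t => Im (f t)) A0 A1 ->
  is_RInt f A0 A1 (RInt_C A0 A1 f).
Proof.
  intros H1 H2.
  exact (@is_RInt_fct_extend_pair R_NormedModule R_NormedModule f A0 A1 _ _
           (RInt_correct _ _ _ H1) (RInt_correct _ _ _ H2)).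
Qed.

Lemma is_RInt_C_zero (f : R -> C) u v : (forall t, Rmin u v < t < Rmax u v -> f t = 0%C) ->
  is_RInt f u v (@zero C_R_NormedModule).
Proof.
  intros H; apply is_RInt_ext with (fun _ => @zero C_R_NormedModule); [intros; symmetry; auto|].
  assert (H0 := is_RInt_const (V := C_R_NormedModule) u v zero).
  rewrite (@scal_zero_r R_AbsRing) in H0; exact H0.
Qed.

Lemma is_RInt_C_extend (f : R -> C) u A0 A1 v l : u <= A0 -> A0 <= A1 -> A1 <= v ->
  (forall t, u < t < A0 -> f t = 0%C) -> (forall t, A1 < t < v -> f t = 0%C) ->
  is_RInt f A0 A1 l -> is_RInt f u v l.
Proof.
  intros H1 H2 H3 Z1 Z2 Hl.
  rewrite <- (plus_zero_r l), <- (plus_zero_l l) at 1.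
  apply is_RInt_Chasles with A1; [apply is_RInt_Chasles with A0|]; auto;
    apply is_RInt_C_zero; intros t Ht; rewrite Rmin_left, Rmax_right in Ht by lra; auto.
Qed.

Lemma is_RInt_gen_supported (f : R -> C) (Fa Fb : (R -> Prop) -> Prop) (Pa Pb : R -> Prop) A0 A1 l :
  Fa Pa -> Fb Pb -> A0 <= A1 ->
  (forall u, Pa u -> u <= A0 /\ forall t, u < t < A0 -> f t = 0%C) ->
  (forall v, Pb v -> A1 <= v /\ forall t, A1 < t < v -> f t = 0%C) ->
  is_RInt f A0 A1 l -> is_RInt_gen f Fa Fb l.
Proof.
  intros Ha Hb HA Hu Hv Hl P HP.
  apply Filter_prod with Pa Pb; [exact Ha | exact Hb|].
  intros u v Hpu Hpv; exists l; split; [|apply locally_singleton, HP].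
  destruct (Hu u Hpu), (Hv v Hpv); apply is_RInt_C_extend with A0 A1; assumption.
Qed.

Lemma RInt_C_zero A0 A1 (f : R -> C) : (forall t, f t = 0%C) -> RInt_C A0 A1 f = 0%C.
Proof.
  intros Hf; apply C_ext; simpl; rewrite <- (RInt_const_0 A0 A1); apply RInt_ext; intros t _;
    now rewrite Hf.
Qed.

Definition supported_in (A0 A1 B0 B1 : R) (h : R -> R -> C) : Prop :=
  forall a b, 0 < b -> (a < A0 \/ A1 < a \/ b < B0 \/ B1 < b) -> h a b = 0%C.

Lemma is_RInt_gen_supported_segment (f : R -> C) A0 A1 : A0 <= A1 ->
  (forall t, t < A0 \/ A1 < t -> f t = 0%C) ->
  ex_RInt (fun t => Re (f t)) A0 A1 -> ex_RInt (fun t => Im (f t)) A0 A1 ->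
  is_RInt_gen f (Rbar_locally m_infty) (Rbar_locally p_infty) (RInt_C A0 A1 f).
Proof.
  intros HA Hf Hre Him.
  apply (is_RInt_gen_supported _ _ _ (fun u => u < A0) (fun v => A1 < v) A0 A1);
    [exists A0; auto | exists A1; auto | exact HA | | | now apply is_RInt_RInt_C].
  - intros u Hu; split; [lra|]; intros t Ht; apply Hf; lra.
  - intros v Hv; split; [lra|]; intros t Ht; apply Hf; lra.
Qed.

Lemma int_Lam_RInt2C (g h : R -> R -> C) A0 A1 B0 B1 : A0 <= A1 -> 0 < B0 -> B0 <= B1 ->
  (forall a b, 0 < b -> g a b = h a b) -> cont_LamC h -> supported_in A0 A1 B0 B1 h ->
  int_Lam g = RInt2C A0 A1 B0 B1 (fun a b => (h a b * mu_density b)%C).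
Proof.
  intros HA HB0 HB Egh Hh Hsupp.
  set (rh := fun a b => (h a b * mu_density b)%C).
  assert (Hrh : cont_LamC rh)
    by (apply cont_LamC_mult; [exact Hh | apply cont_LamC_RtoC, cont_Lam_mu_density]).
  destruct Hrh as [Hre Him].
  assert (Hinner : forall b, 0 < b ->
            @RInt_gen C_R_CompleteNormedModule (fun a => (g a b * mu_density b)%C)
              (Rbar_locally m_infty) (Rbar_locally p_infty) = RInt_C A0 A1 (fun a => rh a b)).
  { intros b Hb; apply is_RInt_gen_unique.
    apply is_RInt_gen_ext with (fun a => rh a b).
    { apply filter_forall; intros [u v] a _; unfold rh; now rewrite Egh. }
    apply is_RInt_gen_supported_segment; [exact HA | | apply (ex_RInt_cont_Lam (fun a b => Re (rh a b)))
                                         | apply (ex_RInt_cont_Lam (fun a b => Im (rh a b)))]; try assumption.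
    intros t Ht; unfold rh; rewrite Hsupp by (auto; lra); ring. }
  unfold int_Lam, RInt2C.
  apply (@is_RInt_gen_unique C_R_CompleteNormedModule (at_right 0) (Rbar_locally p_infty)
    (Proper_StrongProper _ (at_right_proper_filter 0))
    (Proper_StrongProper _ (Rbar_locally_filter p_infty))).
  assert (Hzero : forall t, 0 < t -> (t < B0 \/ B1 < t) ->
            @RInt_gen C_R_CompleteNormedModule (fun a => (g a t * mu_density t)%C)
              (Rbar_locally m_infty) (Rbar_locally p_infty) = RtoC 0).
  { intros t Ht Hout; rewrite Hinner by exact Ht.
    apply RInt_C_zero; intros a; unfold rh; rewrite Hsupp by (auto; lra); ring. }
  apply (is_RInt_gen_supported _ _ _ (fun u => 0 < u < B0) (fun v => B1 < v) B0 B1);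
    [| exists B1; auto | exact HB | | |].
  - exists (mkposreal B0 HB0); intros y Hy Hy0; change (Rabs (y - 0) < B0) in Hy.
    apply Rabs_def2 in Hy; lra.
  - intros u Hu; split; [lra|]; intros t Ht; apply Hzero; lra.
  - intros v Hv; split; [lra|]; intros t Ht; apply Hzero; lra.
  - apply is_RInt_ext with (fun b => RInt_C A0 A1 (fun a => rh a b)).
    { intros b Hb; rewrite Rmin_left, Rmax_right in Hb by lra; symmetry; apply Hinner; lra. }
    apply is_RInt_RInt_C; [apply (ex_RInt_RInt_fst A0 A1 B0 B1 HA HB0 HB (fun a b => Re (rh a b)))
                          | apply (ex_RInt_RInt_fst A0 A1 B0 B1 HA HB0 HB (fun a b => Im (rh a b)))];
      assumption.
Qed.

(** * Transforms against a kernel *)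

Definition transform (A0 A1 B0 B1 : R) (f k : R -> R -> C) (y : R) : C :=
  RInt2C A0 A1 B0 B1 (fun a b => (k (y - a)%R b * f a b * mu_density b)%C).

Section Transform.

Variables (A0 A1 B0 B1 : R) (f : R -> R -> C).
Hypothesis HA : A0 <= A1.
Hypothesis HB0 : 0 < B0.
Hypothesis HB : B0 <= B1.
Hypothesis Hf : cont_LamC f.

Local Notation T := (transform A0 A1 B0 B1 f).

Lemma cont_LamC_transform_integrand k y : cont_LamC k ->
  cont_LamC (fun a b => (k (y - a)%R b * f a b * mu_density b)%C).
Proof.
  intros Hk; apply cont_LamC_mult; [apply cont_LamC_mult; [apply cont_LamC_shift, Hk | exact Hf]|].
  apply cont_LamC_RtoC, cont_Lam_mu_density.
Qed.

Lemma cont_Lam_conv_integrand (K F : R -> R -> R) y : cont_Lam K -> cont_Lam F ->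
  cont_Lam (fun a b => K (y - a) b * (F a b * mu_density b)).
Proof.
  intros HK HF; apply cont_Lam_mult; [apply cont_Lam_shift, HK|].
  apply cont_Lam_mult; [exact HF | apply cont_Lam_mu_density].
Qed.

Lemma re_transform k y : cont_LamC k -> Re (T k y) =
  RInt2 A0 A1 B0 B1 (fun a b => Re (k (y - a) b) * (Re (f a b) * mu_density b)) -
  RInt2 A0 A1 B0 B1 (fun a b => Im (k (y - a) b) * (Im (f a b) * mu_density b)).
Proof.
  intros [K1 K2]; destruct Hf as [F1 F2]; unfold transform; cparts.
  rewrite <- RInt2_minus
    by (auto; apply (cont_Lam_conv_integrand (fun u b => Re (k u b)) (fun a b => Re (f a b)))
           || apply (cont_Lam_conv_integrand (fun u b => Im (k u b)) (fun a b => Im (f a b))); assumption).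
  apply RInt2_ext; try assumption; intros; cparts; ring.
Qed.

Lemma im_transform k y : cont_LamC k -> Im (T k y) =
  RInt2 A0 A1 B0 B1 (fun a b => Re (k (y - a) b) * (Im (f a b) * mu_density b)) +
  RInt2 A0 A1 B0 B1 (fun a b => Im (k (y - a) b) * (Re (f a b) * mu_density b)).
Proof.
  intros [K1 K2]; destruct Hf as [F1 F2]; unfold transform; cparts.
  rewrite <- RInt2_plus
    by (auto; apply (cont_Lam_conv_integrand (fun u b => Re (k u b)) (fun a b => Im (f a b)))
           || apply (cont_Lam_conv_integrand (fun u b => Im (k u b)) (fun a b => Re (f a b))); assumption).
  apply RInt2_ext; try assumption; intros; cparts; ring.
Qed.

Lemma is_DerivC_transform k k' y : (forall u b, 0 < b -> is_DerivC (fun u => k u b) u (k' u b)) ->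
  cont_LamC k -> cont_LamC k' -> is_DerivC (T k) y (T k' y).
Proof.
  intros Hd Hk Hk'; pose proof Hk as [K1 K2]; pose proof Hk' as [K3 K4]; pose proof Hf as [F1 F2].
  assert (HF : forall F, cont_Lam F -> cont_Lam (fun a b => F a b * mu_density b))
    by (intros; apply cont_Lam_mult; [assumption | apply cont_Lam_mu_density]).
  split.
  - apply (is_derive_ext (fun y => RInt2 A0 A1 B0 B1 (fun a b => Re (k (y - a) b) * (Re (f a b) * mu_density b))
                              - RInt2 A0 A1 B0 B1 (fun a b => Im (k (y - a) b) * (Im (f a b) * mu_density b))));
      [intros; symmetry; apply re_transform, Hk|].
    rewrite re_transform by exact Hk'; apply is_derive_Rminus.
    + apply (is_derive_RInt2_conv (fun u b => Re (k u b)) (fun u b => Re (k' u b))); auto.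
      intros u b Hb; apply (Hd u b Hb).
    + apply (is_derive_RInt2_conv (fun u b => Im (k u b)) (fun u b => Im (k' u b))); auto.
      intros u b Hb; apply (Hd u b Hb).
  - apply (is_derive_ext (fun y => RInt2 A0 A1 B0 B1 (fun a b => Re (k (y - a) b) * (Im (f a b) * mu_density b))
                              + RInt2 A0 A1 B0 B1 (fun a b => Im (k (y - a) b) * (Re (f a b) * mu_density b))));
      [intros; symmetry; apply im_transform, Hk|].
    rewrite im_transform by exact Hk'; apply is_derive_Rplus.
    + apply (is_derive_RInt2_conv (fun u b => Re (k u b)) (fun u b => Re (k' u b))); auto.
      intros u b Hb; apply (Hd u b Hb).
    + apply (is_derive_RInt2_conv (fun u b => Im (k u b)) (fun u b => Im (k' u b))); auto.
      intros u b Hb; apply (Hd u b Hb).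
Qed.

Lemma transform_ext k1 k2 y : (forall u b, 0 < b -> k1 u b = k2 u b) -> T k1 y = T k2 y.
Proof. intros E; apply RInt2C_ext; try assumption; intros; now rewrite E. Qed.

Lemma transform_scal (c : C) k y : cont_LamC k -> T (fun u b => c * k u b)%C y = (c * T k y)%C.
Proof.
  intros Hk; unfold transform.
  rewrite <- RInt2C_scal by (try assumption; apply cont_LamC_transform_integrand, Hk).
  apply RInt2C_ext; try assumption; intros; ring.
Qed.

Lemma transform_plus k1 k2 y : cont_LamC k1 -> cont_LamC k2 ->
  T (fun u b => k1 u b + k2 u b)%C y = (T k1 y + T k2 y)%C.
Proof.
  intros H1 H2; unfold transform.
  rewrite <- RInt2C_plus by (try assumption; apply cont_LamC_transform_integrand; assumption).
  apply RInt2C_ext; try assumption; intros; ring.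
Qed.

Lemma transform_minus k1 k2 y : cont_LamC k1 -> cont_LamC k2 ->
  T (fun u b => k1 u b - k2 u b)%C y = (T k1 y - T k2 y)%C.
Proof.
  intros H1 H2; unfold transform.
  rewrite <- RInt2C_minus by (try assumption; apply cont_LamC_transform_integrand; assumption).
  apply RInt2C_ext; try assumption; intros; ring.
Qed.

End Transform.

(** * Test functions *)

Definition C1_Lam (f : R -> R -> C) : Prop :=
  cont_LamC f /\ cont_LamC (d_a f) /\ cont_LamC (d_b f) /\
  (forall a b, 0 < b -> is_DerivC (fun a => f a b) a (d_a f a b)) /\
  (forall a b, 0 < b -> is_DerivC (fun b => f a b) b (d_b f a b)).

Lemma Cc_infty_Lam_C1 f : Cc_infty_Lam f -> C1_Lam f.
Proof.
  intros [Hsmooth _]; destruct (Hsmooth 1%nat) as [[C1 [D1 [E1 F1]]] [C2 [D2 [E2 F2]]]].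
  split; [split; assumption|]; split; [split; assumption|]; split; [split; assumption|].
  split; intros a b Hb; split; apply Derive_correct; first [apply (D1 a b Hb) | apply (D2 a b Hb)].
Qed.

Lemma Cc_infty_Lam_supported f : Cc_infty_Lam f ->
  exists a0 a1 b0 b1, a0 <= a1 /\ 0 < b0 /\ b0 <= b1 /\ supported_in a0 a1 b0 b1 f.
Proof.
  intros [_ [a0 [a1 [b0 [b1 [Hb0 Hsupp]]]]]].
  (* The maxima keep the rectangle nondegenerate when f vanishes identically. *)
  exists a0, (Rmax a0 a1), b0, (Rmax b0 b1); repeat split; [apply Rmax_l | exact Hb0 | apply Rmax_l|].
  intros a b Hb Hout; destruct (classic (f a b = 0%C)) as [E|E]; [exact E|].
  destruct (Hsupp a b Hb E) as [[Ha1 Ha2] [Hb1 Hb2]].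
  pose proof (Rmax_r a0 a1); pose proof (Rmax_r b0 b1); exfalso; lra.
Qed.

Lemma supported_in_widen A0 A1 B0 B1 a0 a1 b0 b1 h : A0 <= a0 -> a1 <= A1 -> B0 <= b0 -> b1 <= B1 ->
  supported_in a0 a1 b0 b1 h -> supported_in A0 A1 B0 B1 h.
Proof. intros ? ? ? ? Hh a b Hb Hout; apply Hh; [exact Hb | lra]. Qed.

Lemma Derive_locally_zero (g : R -> R) x : locally x (fun t => g t = 0) -> Derive g x = 0.
Proof. intros H; rewrite (Derive_ext_loc g (fun _ => 0) x H); apply Derive_const. Qed.

Lemma DerivC_locally_zero (g : R -> C) x : locally x (fun t => g t = 0%C) -> DerivC g x = 0%C.
Proof.
  intros H; unfold DerivC.
  rewrite (Derive_locally_zero (fun y => Re (g y)) x), (Derive_locally_zero (fun y => Im (g y)) x);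
    try reflexivity; eapply filter_imp; try exact H; intros t Ht; now rewrite Ht.
Qed.

Lemma locally_lt x c : x < c -> locally x (fun t => t < c).
Proof.
  intros H; exists (mkposreal (c - x) ltac:(lra)); intros t Ht.
  change (Rabs (t - x) < c - x) in Ht; apply Rabs_def2 in Ht; lra.
Qed.

Lemma locally_gt x c : c < x -> locally x (fun t => c < t).
Proof.
  intros H; exists (mkposreal (x - c) ltac:(lra)); intros t Ht.
  change (Rabs (t - x) < x - c) in Ht; apply Rabs_def2 in Ht; lra.
Qed.

Section Support.

Variables (f : R -> R -> C) (a0 a1 b0 b1 : R).
Hypothesis Hsupp : supported_in a0 a1 b0 b1 f.

Lemma supported_in_d_a : supported_in a0 a1 b0 b1 (d_a f).
Proof.
  intros a b Hb Hout; apply DerivC_locally_zero.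
  destruct Hout as [H|[H|[H|H]]].
  - eapply filter_imp; [|apply (locally_lt a a0 H)]; intros t Ht; apply Hsupp; auto.
  - eapply filter_imp; [|apply (locally_gt a a1 H)]; intros t Ht; apply Hsupp; auto.
  - apply filter_forall; intros t; apply Hsupp; auto.
  - apply filter_forall; intros t; apply Hsupp; auto.
Qed.

Lemma supported_in_d_b : supported_in a0 a1 b0 b1 (d_b f).
Proof.
  intros a b Hb Hout; apply DerivC_locally_zero.
  destruct Hout as [H|[H|[H|H]]].
  - eapply filter_imp; [|apply (locally_gt b 0 Hb)]; intros t Ht; apply Hsupp; auto.
  - eapply filter_imp; [|apply (locally_gt b 0 Hb)]; intros t Ht; apply Hsupp; auto.
  - eapply filter_imp; [|apply (filter_and _ _ (locally_gt b 0 Hb) (locally_lt b b0 H))].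
    intros t [Ht1 Ht2]; apply Hsupp; auto.
  - eapply filter_imp; [|apply (filter_and _ _ (locally_gt b 0 Hb) (locally_gt b b1 H))].
    intros t [Ht1 Ht2]; apply Hsupp; auto.
Qed.

End Support.

Lemma is_DerivC_weighted_kernel_a (al dal : R -> R -> R) tau x a b : 0 < b ->
  is_derive (fun a => al a b) a (dal a b) ->
  is_DerivC (fun a => Ci * al a b * kernel tau (x - a) b * mu_density b)%C a
    (Ci * (dal a b * kernel tau (x - a) b - al a b * kernel_du tau (x - a) b) * mu_density b)%C.
Proof.
  intros Hb Hal; eapply is_DerivC_eq.
  - apply (is_DerivC_mult (fun a => Ci * al a b * kernel tau (x - a) b)%C (fun _ => RtoC (mu_density b)));
      [|apply is_DerivC_const].
    apply (is_DerivC_mult (fun a => Ci * al a b)%C (fun a => kernel tau (x - a) b)).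
    + apply (is_DerivC_mult (fun _ => Ci)); [apply is_DerivC_const | apply is_DerivC_RtoC, Hal].
    + apply (is_DerivC_comp (fun u => kernel tau u b) (fun a => x - a)); [apply is_DerivC_kernel_u, Hb|].
      apply (is_derive_Rminus (fun _ => x) (fun a => a)); [apply is_derive_Rconst | apply is_derive_Rid].
  - rewrite RtoC_minus; ring.
Qed.

Lemma is_DerivC_weighted_kernel_b (be dbe : R -> R -> R) tau x a b : 0 < b ->
  is_derive (fun b => be a b) b (dbe a b) ->
  is_DerivC (fun b => Ci * be a b * kernel tau (x - a) b * mu_density b)%C b
    (Ci * ((dbe a b * kernel tau (x - a) b + be a b * kernel_db tau (x - a) b) * mu_density b
           + be a b * kernel tau (x - a) b * mu_density_deriv b))%C.
Proof.
  intros Hb Hbe; eapply is_DerivC_eq.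
  - apply (is_DerivC_mult (fun b => Ci * be a b * kernel tau (x - a) b)%C (fun b => RtoC (mu_density b)));
      [|apply is_DerivC_RtoC, is_derive_mu_density, Hb].
    apply (is_DerivC_mult (fun b => Ci * be a b)%C (fun b => kernel tau (x - a) b)).
    + apply (is_DerivC_mult (fun _ => Ci)); [apply is_DerivC_const | apply is_DerivC_RtoC, Hbe].
    + apply is_DerivC_kernel_b, Hb.
  - ring.
Qed.

Lemma Cadd_sub_1 (s : C) : (s + 1 - 1)%C = s.
Proof. ring. Qed.

Lemma Ci_pow_SS n : (Ci ^ S (S n) = - Ci ^ n)%C.
Proof.
  simpl; rewrite Cmult_assoc; replace (Ci * Ci)%C with (- (1))%C by (apply C_ext; simpl; ring); ring.
Qed.

Lemma RtoC_neq_0 r : r <> 0 -> RtoC r <> 0%C.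
Proof. intros H E; apply H; exact (f_equal Re E). Qed.

#[local] Hint Rewrite RtoC_plus RtoC_minus RtoC_mult RtoC_opp RtoC_pow : push_RtoC.
#[local] Hint Rewrite RtoC_div RtoC_inv using pos_neq_0 : push_RtoC.

(* Since K(s + 1) = w K(s), every kernel involved is a rational multiple of K(tau - 1); once the
   real coefficients are pushed into C and denominators are cleared, the identity is polynomial
   in x - a, b, tau and i, with i^2 = -1. *)
Ltac kernel_identity tau u b Hb :=
  unfold kernel_duu, kernel_du, kernel_db, mu_density, mu_density_deriv;
  rewrite ?Cadd_sub_1, ?(kernel_pred (tau + 1) u b Hb), ?Cadd_sub_1, ?(kernel_pred tau u b Hb);
  unfold kernel_base;
  autorewrite with push_RtoC;
  field_simplify_eq;
  [ rewrite ?Ci_pow_SS; ring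
  | repeat split; first [ assumption | apply Ci_nz | apply RtoC_neq_0; lra ] .. ].

Section Identities.

Variables (f : R -> R -> C) (a0 a1 b0 b1 : R) (tau : C).
Hypothesis Ha : a0 <= a1.
Hypothesis Hb0 : 0 < b0.
Hypothesis Hb : b0 <= b1.
Hypothesis Hsupp : supported_in a0 a1 b0 b1 f.
Hypothesis Hf : cont_LamC f.
Hypothesis Hfa : cont_LamC (d_a f).
Hypothesis Hfb : cont_LamC (d_b f).
Hypothesis Hda : forall a b, 0 < b -> is_DerivC (fun a => f a b) a (d_a f a b).
Hypothesis Hdb : forall a b, 0 < b -> is_DerivC (fun b => f a b) b (d_b f a b).

(* Integrating over a rectangle strictly larger than the support of f makes f and its
   derivatives vanish on the boundary, as integration by parts requires. *)
Let HA : a0 - 1 <= a1 + 1. Proof. lra. Qed.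
Let HB0 : 0 < b0 / 2. Proof. lra. Qed.
Let HB : b0 / 2 <= b1 + 1. Proof. lra. Qed.

Local Notation RInt2C_box := (RInt2C (a0 - 1) (a1 + 1) (b0 / 2) (b1 + 1)).
Local Notation T := (transform (a0 - 1) (a1 + 1) (b0 / 2) (b1 + 1) f).

Lemma supported_in_rect h :
  supported_in a0 a1 b0 b1 h -> supported_in (a0 - 1) (a1 + 1) (b0 / 2) (b1 + 1) h.
Proof. apply supported_in_widen; lra. Qed.

Lemma J_mult_b (g : R -> R -> C) (m : R -> C) s y : cont_LamC (fun _ b => m b) ->
  (forall a b, 0 < b -> g a b = (m b * f a b)%C) -> J g s y = T (fun u b => m b * kernel s u b)%C y.
Proof.
  intros Hm Hg; unfold J, transform.
  rewrite (int_Lam_RInt2C _ (fun a b => m b * kernel s (y - a)%R b * f a b)%C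
             (a0 - 1) (a1 + 1) (b0 / 2) (b1 + 1)); try assumption.
  - apply RInt2C_ext; try assumption; intros; ring.
  - intros; rewrite Kker_kernel, Hg by assumption; ring.
  - cont_Lam_auto.
  - apply supported_in_rect; intros a b ? ?; rewrite Hsupp by assumption; ring.
Qed.

Lemma J_transform s y : J f s y = T (kernel s) y.
Proof.
  rewrite (J_mult_b f (fun _ => 1%C)) by (try apply cont_LamC_const; intros; ring).
  apply transform_ext; try assumption; intros; ring.
Qed.

Lemma is_DerivC_J_succ y : is_DerivC (J f (tau + 1)) y (T (kernel_du (tau + 1)) y).
Proof.
  apply (is_DerivC_ext (T (kernel (tau + 1)))); [intros; symmetry; apply J_transform|].
  apply is_DerivC_transform; try assumption; [|cont_Lam_auto..].
  intros u b Hb'; apply is_DerivC_kernel_u, Hb'.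
Qed.

Lemma is_DerivC_DerivC_J_succ y :
  is_DerivC (DerivC (J f (tau + 1))) y (T (kernel_duu (tau + 1)) y).
Proof.
  apply (is_DerivC_ext (T (kernel_du (tau + 1)))).
  { intros; symmetry; apply is_DerivC_unique, is_DerivC_J_succ. }
  apply is_DerivC_transform; try assumption; [|cont_Lam_auto..].
  intros u b Hb'; apply is_DerivC_kernel_du, Hb'.
Qed.

Lemma RInt2C_by_parts_a (phi dphi : R -> R -> C) :
  (forall a b, 0 < b -> is_DerivC (fun a => phi a b) a (dphi a b)) -> cont_LamC phi -> cont_LamC dphi ->
  RInt2C_box (fun a b => phi a b * d_a f a b)%C = (- RInt2C_box (fun a b => dphi a b * f a b))%C.
Proof.
  intros Hd Hphi Hdphi.
  assert (H0 : RInt2C_box (fun a b => dphi a b * f a b + phi a b * d_a f a b)%C = 0%C).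
  { apply (RInt2C_partial_a_zero _ _ _ _ HB0 HB (fun a b => phi a b * f a b)%C); [| cont_Lam_auto |].
    - intros a b Hb'; apply (is_DerivC_mult (fun a => phi a b) (fun a => f a b)); auto.
    - intros b Hb'; split; rewrite Hsupp by (auto; lra); ring. }
  rewrite RInt2C_plus in H0 by (try assumption; cont_Lam_auto).
  set (X := RInt2C_box (fun a b => dphi a b * f a b)%C) in *.
  set (Y := RInt2C_box (fun a b => phi a b * d_a f a b)%C) in *.
  replace Y with ((X + Y) - X)%C by ring; rewrite H0; ring.
Qed.

Lemma RInt2C_by_parts_b (phi dphi : R -> R -> C) :
  (forall a b, 0 < b -> is_DerivC (fun b => phi a b) b (dphi a b)) -> cont_LamC phi -> cont_LamC dphi ->
  RInt2C_box (fun a b => phi a b * d_b f a b)%C = (- RInt2C_box (fun a b => dphi a b * f a b))%C.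
Proof.
  intros Hd Hphi Hdphi.
  assert (H0 : RInt2C_box (fun a b => dphi a b * f a b + phi a b * d_b f a b)%C = 0%C).
  { apply (RInt2C_partial_b_zero _ _ _ _ HA HB0 HB (fun a b => phi a b * f a b)%C); [| cont_Lam_auto.. |].
    - intros a b Hb'; apply (is_DerivC_mult (fun b => phi a b) (fun b => f a b)); auto.
    - intros a; split; rewrite Hsupp by (auto; lra); ring. }
  rewrite RInt2C_plus in H0 by (try assumption; cont_Lam_auto).
  set (X := RInt2C_box (fun a b => dphi a b * f a b)%C) in *.
  set (Y := RInt2C_box (fun a b => phi a b * d_b f a b)%C) in *.
  replace Y with ((X + Y) - X)%C by ring; rewrite H0; ring.
Qed.

(* The hypothesis on E says E(x - a, b) mu(b) = - (d/da (i al K mu) + d/db (i be K mu)) with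
   K = K(tau; a + ib, x): the vector field i (al d/da + be d/db) moved onto the kernel. *)
Lemma J_vector_field (al be dal dbe : R -> R -> R) (L E : R -> R -> C) x :
  (forall a b, 0 < b -> is_derive (fun a => al a b) a (dal a b)) ->
  (forall a b, 0 < b -> is_derive (fun b => be a b) b (dbe a b)) ->
  cont_Lam al -> cont_Lam be -> cont_Lam dal -> cont_Lam dbe -> cont_LamC E ->
  (forall a b, 0 < b -> L a b = Ci * (al a b * d_a f a b + be a b * d_b f a b))%C ->
  (forall a b, 0 < b -> let u := (x - a)%R in
     E u b * mu_density b =
     - Ci * ((dal a b * kernel tau u b - al a b * kernel_du tau u b) * mu_density b
             + (dbe a b * kernel tau u b + be a b * kernel_db tau u b) * mu_density b
             + be a b * kernel tau u b * mu_density_deriv b))%C ->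
  J L tau x = T E x.
Proof.
  intros Hal Hbe Cal Cbe Cdal Cdbe CE HL HE.
  set (phi_a := fun a b => (Ci * al a b * kernel tau (x - a)%R b * mu_density b)%C).
  set (phi_b := fun a b => (Ci * be a b * kernel tau (x - a)%R b * mu_density b)%C).
  set (dphi_a := fun a b =>
    (Ci * (dal a b * kernel tau (x - a)%R b - al a b * kernel_du tau (x - a)%R b) * mu_density b)%C).
  set (dphi_b := fun a b => (Ci * ((dbe a b * kernel tau (x - a)%R b + be a b * kernel_db tau (x - a)%R b)
                      * mu_density b + be a b * kernel tau (x - a)%R b * mu_density_deriv b))%C).
  unfold J.
  rewrite (int_Lam_RInt2C _
             (fun a b => kernel tau (x - a)%R b * (Ci * (al a b * d_a f a b + be a b * d_b f a b)))%C
             (a0 - 1) (a1 + 1) (b0 / 2) (b1 + 1)); try assumption.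
  - transitivity (RInt2C_box (fun a b => phi_a a b * d_a f a b + phi_b a b * d_b f a b)%C).
    { apply RInt2C_ext; try assumption; intros; unfold phi_a, phi_b; ring. }
    rewrite RInt2C_plus by (try assumption; unfold phi_a, phi_b; cont_Lam_auto).
    rewrite (RInt2C_by_parts_a phi_a dphi_a), (RInt2C_by_parts_b phi_b dphi_b)
      by first [ intros; apply is_DerivC_weighted_kernel_a; auto
               | intros; apply is_DerivC_weighted_kernel_b; auto
               | unfold phi_a, phi_b, dphi_a, dphi_b; cont_Lam_auto ].
    unfold transform; symmetry.
    transitivity (RInt2C_box (fun a b => (-1) * (dphi_a a b * f a b) + (-1) * (dphi_b a b * f a b))%C).
    + apply RInt2C_ext; try assumption; intros a b Hb'; specialize (HE a b Hb'); simpl in HE.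
      replace (E (x - a)%R b * f a b * mu_density b)%C
        with (E (x - a)%R b * mu_density b * f a b)%C by ring.
      rewrite HE; unfold dphi_a, dphi_b; ring.
    + rewrite RInt2C_plus, !RInt2C_scal by (try assumption; unfold dphi_a, dphi_b; cont_Lam_auto); ring.
  - intros; rewrite Kker_kernel, HL by assumption; reflexivity.
  - cont_Lam_auto.
  - apply supported_in_rect; intros a b Hb' Hout.
    rewrite (supported_in_d_a f a0 a1 b0 b1 Hsupp a b Hb' Hout),
            (supported_in_d_b f a0 a1 b0 b1 Hsupp a b Hb' Hout); ring.
Qed.

Hypothesis Htau1 : (1 + tau)%C <> 0%C.
Hypothesis Htau2 : (1 + 2 * tau)%C <> 0%C.

Open Scope C_scope.

Lemma J_div_z_sub_zbar x : J (fun a b => / (pt a b - Cconj (pt a b)) * f a b) tau x =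
  / (4 * Ci * (1 + tau) * (1 + 2 * tau)) * T (kernel_duu (tau + 1)) x
  - (2 * Ci * tau) / (2 * (1 + 2 * tau)) * J f (tau - 1) x.
Proof.
  rewrite (J_mult_b _ (fun b => RtoC (- / (2 * b)) * Ci)).
  - rewrite J_transform, <- !transform_scal, <- transform_minus by (try assumption; cont_Lam_auto).
    apply transform_ext; try assumption; intros u b Hb'; kernel_identity tau u b Hb'.
  - cont_Lam_auto.
  - intros a b Hb'; f_equal; unfold pt; apply C_ext; cparts; field; split; try lra; intro; nra.
Qed.

(* For a real polynomial p, p(z) d/dz - p(zbar) d/dzbar = i (Im p d/da - Re p d/db). *)
Lemma J_d_z_sub_d_zbar x : J (fun a b => d_z f a b - d_zbar f a b) tau x =
  (2 + tau) / (2 * Ci * (1 + tau) * (1 + 2 * tau)) * T (kernel_duu (tau + 1)) x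
  + (2 * Ci * tau * (-1 + tau)) / (1 + 2 * tau) * J f (tau - 1) x.
Proof.
  rewrite J_transform, <- !transform_scal, <- transform_plus by (try assumption; cont_Lam_auto).
  apply (J_vector_field (fun _ _ => 0%R) (fun _ _ => (-1)%R) (fun _ _ => 0%R) (fun _ _ => 0%R));
    try (intros; apply is_derive_Rconst); try cont_Lam_auto.
  - intros; unfold d_z, d_zbar; apply C_ext; cparts; field.
  - intros a b Hb'; cbv zeta; kernel_identity tau (x - a)%R b Hb'.
Qed.

Lemma J_z_d_z_sub_zbar_d_zbar x :
  J (fun a b => pt a b * d_z f a b - Cconj (pt a b) * d_zbar f a b) tau x =
  (2 + tau) / (2 * Ci * (1 + tau) * (1 + 2 * tau)) * (RtoC x * T (kernel_duu (tau + 1)) x)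
  - (2 + tau) / (2 * Ci * (1 + tau)) * T (kernel_du (tau + 1)) x
  + (2 * Ci * (-1 + tau) * tau) / (1 + 2 * tau) * (RtoC x * J f (tau - 1) x).
Proof.
  rewrite J_transform, <- !transform_scal, <- transform_minus, <- transform_plus
    by (try assumption; cont_Lam_auto).
  apply (J_vector_field (fun _ b => b) (fun a _ => (- a)%R) (fun _ _ => 0%R) (fun _ _ => 0%R));
    try (intros; apply is_derive_Rconst); try cont_Lam_auto.
  - intros; unfold d_z, d_zbar, pt; apply C_ext; cparts; field.
  - intros a b Hb'; cbv zeta; kernel_identity tau (x - a)%R b Hb'.
Qed.

Lemma J_z2_d_z_sub_zbar2_d_zbar x :
  J (fun a b => pt a b * pt a b * d_z f a b - Cconj (pt a b) * Cconj (pt a b) * d_zbar f a b) tau x =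
  (2 + tau) / (2 * Ci * (1 + tau) * (1 + 2 * tau)) * (RtoC x * RtoC x * T (kernel_duu (tau + 1)) x)
  - (2 * (2 + tau)) / (2 * Ci * (1 + tau)) * (RtoC x * T (kernel_du (tau + 1)) x)
  + (2 * (2 + tau)) / (2 * Ci) * J f (tau + 1) x
  + (2 * Ci * tau * (-1 + tau)) / (1 + 2 * tau) * (RtoC x * RtoC x * J f (tau - 1) x).
Proof.
  rewrite !J_transform, <- !transform_scal, <- transform_minus, <- !transform_plus
    by (try assumption; cont_Lam_auto).
  apply (J_vector_field (fun a b => 2 * a * b)%R (fun a b => b * b - a * a)%R
                        (fun _ b => 2 * b)%R (fun _ b => 2 * b)%R);
    try cont_Lam_auto.
  - intros a b Hb'; auto_derive; [easy | ring].
  - intros a b Hb'; auto_derive; [easy | ring].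
  - intros; unfold d_z, d_zbar, pt; apply C_ext; cparts; field.
  - intros a b Hb'; cbv zeta; kernel_identity tau (x - a)%R b Hb'.
Qed.

End Identities.

Open Scope C_scope.

Theorem theorem1 (f : R -> R -> C) (Hf : Cc_infty_Lam f) (tau : C)
  (Ht1 : tau <> RtoC (-1)) (Ht2 : tau <> RtoC (- / 2)) (x : R) :
  let Jp := J f (tau + 1) in
  let Jm := J f (tau - 1) in
  let D1 := DerivC Jp x in
  let D2 := DerivC (DerivC Jp) x in
  ex_DerivC Jp x /\ ex_DerivC (DerivC Jp) x /\
  (* (1) multiplication by 1/(z - zbar) *)
  J (fun a b => / (pt a b - Cconj (pt a b)) * f a b) tau x =
    / (4 * Ci * (1 + tau) * (1 + 2 * tau)) * D2
    - (2 * Ci * tau) / (2 * (1 + 2 * tau)) * Jm x /\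
  (* (2) d/dz - d/dzbar *)
  J (fun a b => d_z f a b - d_zbar f a b) tau x =
    (2 + tau) / (2 * Ci * (1 + tau) * (1 + 2 * tau)) * D2
    + (2 * Ci * tau * (-1 + tau)) / (1 + 2 * tau) * Jm x /\
  (* (3) z d/dz - zbar d/dzbar *)
  J (fun a b => pt a b * d_z f a b - Cconj (pt a b) * d_zbar f a b) tau x =
    (2 + tau) / (2 * Ci * (1 + tau) * (1 + 2 * tau)) * (RtoC x * D2)
    - (2 + tau) / (2 * Ci * (1 + tau)) * D1
    + (2 * Ci * (-1 + tau) * tau) / (1 + 2 * tau) * (RtoC x * Jm x) /\
  (* (4) z^2 d/dz - zbar^2 d/dzbar *)
  J (fun a b => pt a b * pt a b * d_z f a b
                - Cconj (pt a b) * Cconj (pt a b) * d_zbar f a b) tau x =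
    (2 + tau) / (2 * Ci * (1 + tau) * (1 + 2 * tau)) * (RtoC x * RtoC x * D2)
    - (2 * (2 + tau)) / (2 * Ci * (1 + tau)) * (RtoC x * D1)
    + (2 * (2 + tau)) / (2 * Ci) * Jp x
    + (2 * Ci * tau * (-1 + tau)) / (1 + 2 * tau) * (RtoC x * RtoC x * Jm x).
Proof.
  cbv zeta.
  destruct (Cc_infty_Lam_supported f Hf) as (a0 & a1 & b0 & b1 & Ha & Hb0 & Hb & Hsupp).
  destruct (Cc_infty_Lam_C1 f Hf) as (Hc & Hca & Hcb & Hda & Hdb).
  assert (Htau1 : 1 + tau <> 0)
    by (intros E; apply Ht1, C_ext; generalize (f_equal Re E) (f_equal Im E); cparts; intros; lra).
  assert (Htau2 : 1 + 2 * tau <> 0)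
    by (intros E; apply Ht2, C_ext; generalize (f_equal Re E) (f_equal Im E); cparts; intros; lra).
  pose proof (is_DerivC_J_succ f a0 a1 b0 b1 tau Ha Hb0 Hb Hsupp Hc x) as HD1.
  pose proof (is_DerivC_DerivC_J_succ f a0 a1 b0 b1 tau Ha Hb0 Hb Hsupp Hc x) as HD2.
  rewrite (is_DerivC_unique _ _ _ HD1), (is_DerivC_unique _ _ _ HD2).
  split; [|split]; [eapply is_DerivC_ex; eassumption .. | repeat split].
  - eapply J_div_z_sub_zbar; eassumption.
  - eapply J_d_z_sub_d_zbar; eassumption.
  - eapply J_z_d_z_sub_zbar_d_zbar; eassumption.
  - eapply J_z2_d_z_sub_zbar2_d_zbar; eassumption.
Qed.
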